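(* Suppose Assumptions 1 and 4 hold, and let $d^*=\max_iL_{ii}$ be the maximal degree of $\mathcal G$. Then $\bar{\mathfrak A}$ is maximally monotone, and $\bar{\mathfrak B}$ is $\beta_E$-cocoercive for every $\beta_E\in\big(0,\tfrac12\min\{\bar\chi,\tfrac1{2d^*}\}\big)$.
   Context: Game: players $i=1,\dots,N$, $x_i\in\Omega_i\subseteq\mathbb R^{n_i}$, $n=\sum n_i$, $\Omega=\prod\Omega_i$, costs $f_i(x_i,x_{-i})$ defined and $C^1$ in $x_i$ on $\mathbb R^n$, data $A_i\in\mathbb R^{m\times n_i}$, $b_i\in\mathbb R^m$, $X=\Omega\cap\{\sum A_ix_i=\sum b_i\}$. Assumption 1: each $\Omega_i$ closed convex with nonempty interior; $X$ and each $\{x_i\in\Omega_i:(x_i,x_{-i})\in X\}$ have nonempty relative interior; $f_i$ convex in $x_i$. Graph: connected undirected graph, $N$ nodes, $M$ arbitrarily oriented edges, incidence $V$ ($V_{il}=1$ if $e_l$ points to $i$, $-1$ if starts at $i$, $0$ else), $L=VV^T$; $\mathbf V=V\otimes I_m$, $\mathbf L=L\otimes I_n$, $\mathbf A=\mathrm{diag}(A_i)$, $\mathbf b=\mathrm{col}(b_i)$. $\mathbf x=\mathrm{col}(x^{(1)},\dots,x^{(N)})\in\mathbb R^{Nn}$; $\mathcal R_i=[0_{n_i\times n_{<i}}\ I_{n_i}\ 0_{n_i\times n_{>i}}]$, $\mathcal R=\mathrm{diag}(\mathcal R_1,\dots,\mathcal R_N)$; $\mathbf F(\mathbf x)=\mathrm{col}(\nabla_{x_i}f_i(x^{(i)}))_i$.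 Assumption 4: for all $\mathbf x,\mathbf x'\in\mathbb R^{Nn}$, $\langle\mathbf x-\mathbf x',\mathcal R^T\mathbf F(\mathbf x)-\mathcal R^T\mathbf F(\mathbf x')\rangle\ge\bar\chi\|\mathbf F(\mathbf x)-\mathbf F(\mathbf x')\|^2$ with $\bar\chi>0$. $\bar{\mathfrak A}(\mathbf W)=\mathrm{col}(-\mathbf V\mathbf z-\mathbf A\mathcal R\mathbf x,\ \mathbf V^T\Lambda,\ \mathcal R^TN_\Omega(\mathcal R\mathbf x)+\mathcal R^T\mathbf A^T\Lambda)$, $\bar{\mathfrak B}(\mathbf W)=\mathrm{col}(\mathbf b,\mathbf 0,\mathcal R^T\mathbf F(\mathbf x)+\mathbf L\mathbf x)$ for $\mathbf W=\mathrm{col}(\Lambda,\mathbf z,\mathbf x)\in\mathbb R^{Nm}\times\mathbb R^{Mm}\times\mathbb R^{Nn}$. $\beta$-cocoercive means $\langle u-v,Su-Sv\rangle\ge\beta\|Su-Sv\|^2$. *)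

(* A vector in R^k is a function T -> R on a
   finite index type T with #|T| = k. *)
From mathcomp Require Import all_boot.
From Stdlib Require Import Reals.


Unset Printing Implicit Defensive.
Local Open Scope R_scope.

Definition vsum {T : finType} (u : T -> R) : R := \big[Rplus/0]_(t : T) u t.
Definition dot {T : finType} (u v : T -> R) : R := vsum (fun t => u t * v t).
Definition nsq {T : finType} (u : T -> R) : R := dot u u.
Definition vadd {T : Type} (u v : T -> R) : T -> R := fun t => u t + v t.
Definition vsub {T : Type} (u v : T -> R) : T -> R := fun t => u t - v t.
Definition vopp {T : Type} (u : T -> R) : T -> R := fun t => - u t.
Definition vzero {T : Type} : T -> R := fun _ => 0.

Definition is_closed {T : finType} (S : (T -> R) -> Prop) : Prop :=
  forall (u : nat -> T -> R) (l : T -> R),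
    (forall k, S (u k)) -> (forall c, Un_cv (fun k => u k c) (l c)) -> S l.
Definition is_convex {T : finType} (S : (T -> R) -> Prop) : Prop :=
  forall x y t, 0 <= t <= 1 -> S x -> S y ->
    S (fun c => t * x c + (1 - t) * y c).
Definition has_nonempty_interior {T : finType} (S : (T -> R) -> Prop) : Prop :=
  exists x eps, 0 < eps /\
    forall y, (forall c, Rabs (y c - x c) < eps) -> S y.
Definition aff_hull {T : finType} (S : (T -> R) -> Prop) (y : T -> R) : Prop :=
  exists (k : nat) (p : 'I_k -> T -> R) (w : 'I_k -> R),
    (forall j, S (p j)) /\ vsum w = 1 /\
    forall c, y c = vsum (fun j => w j * p j c).
Definition rel_interior {T : finType} (S : (T -> R) -> Prop) (x : T -> R) : Prop :=
  S x /\ exists eps, 0 < eps /\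
    forall y, aff_hull S y -> (forall c, Rabs (y c - x c) < eps) -> S y.
Definition has_nonempty_rel_interior {T : finType} (S : (T -> R) -> Prop) : Prop :=
  exists x, rel_interior S x.
Definition continuous_at {T : finType} (h : (T -> R) -> R) (y : T -> R) : Prop :=
  forall eps, 0 < eps -> exists del, 0 < del /\
    forall y', (forall c, Rabs (y' c - y c) < del) -> Rabs (h y' - h y) < eps.
Definition normal_cone {T : finType} (S : (T -> R) -> Prop) (y v : T -> R) : Prop :=
  S y /\ forall z, S z -> dot v (vsub z y) <= 0.

(* global decision coordinates: pairs (player i, coordinate k < n_i);
   R^n with n = sum_i n_i is  Idx ns -> R *)
Definition Idx (N : nat) (ns : 'I_N -> nat) : finType := {i : 'I_N & 'I_(ns i)}.

Section Game.
Variables (N M m : nat) (ns : 'I_N -> nat).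
Local Notation Idx := (@Idx N ns).

Definition block (x : Idx -> R) (i : 'I_N) : 'I_(ns i) -> R :=
  fun k => x (Tagged (fun j => 'I_(ns j)) k).
Definition setblock (x : Idx -> R) (i : 'I_N) (y : 'I_(ns i) -> R) : Idx -> R :=
  fun p => @untag _ (fun j => 'I_(ns j)) _ (x p) i y p.
Definition upd (x : Idx -> R) (p0 : Idx) (t : R) : Idx -> R :=
  fun p => if p == p0 then t else x p.

Variables (Om : forall i : 'I_N, ('I_(ns i) -> R) -> Prop)
          (A : forall i : 'I_N, 'I_m -> 'I_(ns i) -> R)
          (b : 'I_N -> 'I_m -> R).

Definition Omega (x : Idx -> R) : Prop := forall i, Om i (block x i).
Definition feasible (x : Idx -> R) : Prop :=
  Omega x /\ forall r : 'I_m,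
    vsum (fun i => vsum (fun k : 'I_(ns i) => A i r k * block x i k))
    = vsum (fun i => b i r).
Definition player_feasible (x : Idx -> R) (i : 'I_N) (y : 'I_(ns i) -> R) : Prop :=
  Om i y /\ feasible (setblock x i y).

Definition is_partial_gradient_C1 (f : 'I_N -> (Idx -> R) -> R)
    (g : forall i : 'I_N, (Idx -> R) -> 'I_(ns i) -> R) : Prop :=
  (forall i x (k : 'I_(ns i)),
     derivable_pt_lim (fun t => f i (upd x (Tagged (fun j => 'I_(ns j)) k) t))
                      (x (Tagged (fun j => 'I_(ns j)) k)) (g i x k)) /\
  (forall i x (k : 'I_(ns i)) y,
     continuous_at (fun y' => g i (setblock x i y') k) y).

Definition Assumption1 (f : 'I_N -> (Idx -> R) -> R) : Prop :=
  (forall i, is_closed (@Om i) /\ is_convex (@Om i) /\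
             has_nonempty_interior (@Om i)) /\
  has_nonempty_rel_interior feasible /\
  (forall x i, feasible x -> has_nonempty_rel_interior (player_feasible x i)) /\
  (forall i x y1 y2 t, 0 <= t <= 1 ->
     f i (setblock x i (fun c => t * y1 c + (1 - t) * y2 c))
     <= t * f i (setblock x i y1) + (1 - t) * f i (setblock x i y2)).

Variables (src dst : 'I_M -> 'I_N).
Definition adj : rel 'I_N :=
  fun i j => [exists l, ((src l == i) && (dst l == j)) || ((src l == j) && (dst l == i))].
Definition simple_connected_graph : Prop :=
  (forall l, src l <> dst l) /\
  (forall l l', (src l = src l' /\ dst l = dst l') \/ (src l = dst l' /\ dst l = src l')
                -> l = l') /\
  (forall i j, connect adj i j).
Definition Vinc (i : 'I_N) (l : 'I_M) : R :=
  if dst l == i then 1 else if src l == i then -1 else 0.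
Definition Lap (i j : 'I_N) : R := vsum (fun l => Vinc i l * Vinc j l).
Definition dstar : R := \big[Rmax/0]_(i : 'I_N) Lap i i.

Definition Lam := 'I_N -> 'I_m -> R.
Definition Zv := 'I_M -> 'I_m -> R.
Definition XX := 'I_N -> Idx -> R.          (* R^{Nn}, x = col(x^(1..N)) *)
Definition Wsp : Type := (Lam * Zv * XX)%type.

Definition dot2 {T1 T2 : finType} (u v : T1 -> T2 -> R) : R :=
  vsum (fun a => dot (u a) (v a)).
Definition dotW (w w' : Wsp) : R :=
  let '(l, z, x) := w in let '(l', z', x') := w' in
  dot2 l l' + dot2 z z' + dot2 x x'.
Definition subW (w w' : Wsp) : Wsp :=
  let '(l, z, x) := w in let '(l', z', x') := w' in
  (fun a c => l a c - l' a c, fun a c => z a c - z' a c, fun a c => x a c - x' a c).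

Definition bV (z : Zv) : Lam := fun i r => vsum (fun l => Vinc i l * z l r).
Definition bVt (lam : Lam) : Zv := fun l r => vsum (fun i => Vinc i l * lam i r).
Definition bL (x : XX) : XX := fun i p => vsum (fun j => Lap i j * x j p).
Definition Rop (x : XX) : Idx -> R := fun p => x (tag p) p.
Definition Rt (y : Idx -> R) : XX := fun j p => if tag p == j then y p else 0.
Definition bA (y : Idx -> R) : Lam :=
  fun i r => vsum (fun k : 'I_(ns i) => A i r k * block y i k).
Definition bAt (lam : Lam) : Idx -> R :=
  fun p => vsum (fun r => A (tag p) r (tagged p) * lam (tag p) r).
Definition bb : Lam := b.

Variable (g : forall i : 'I_N, (Idx -> R) -> 'I_(ns i) -> R).
Definition Fop (x : XX) : Idx -> R := fun p => g (tag p) (x (tag p)) (tagged p).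

Definition Assumption4 (chi : R) : Prop :=
  forall x x' : XX,
    dot2 (fun i p => x i p - x' i p) (fun i p => Rt (Fop x) i p - Rt (Fop x') i p)
    >= chi * nsq (vsub (Fop x) (Fop x')).

Definition Abar (w u : Wsp) : Prop :=
  let '(lam, z, x) := w in let '(u1, u2, u3) := u in
  u1 = (fun i r => - bV z i r - bA (Rop x) i r) /\
  u2 = bVt lam /\
  exists v, normal_cone Omega (Rop x) v /\
            u3 = (fun i p => Rt v i p + Rt (bAt lam) i p).

Definition Bbar (w : Wsp) : Wsp :=
  let '(lam, z, x) := w in
  (bb, (fun _ _ => 0), (fun i p => Rt (Fop x) i p + bL x i p)).
End Game.

Definition monotone {W : Type} (ip : W -> W -> R) (sub : W -> W -> W)
  (T : W -> W -> Prop) : Prop :=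
  forall w w' u u', T w u -> T w' u' -> 0 <= ip (sub w w') (sub u u').
Definition maximally_monotone {W : Type} (ip : W -> W -> R) (sub : W -> W -> W)
  (T : W -> W -> Prop) : Prop :=
  monotone ip sub T /\
  forall T' : W -> W -> Prop, monotone ip sub T' ->
    (forall w u, T w u -> T' w u) -> forall w u, T' w u -> T w u.
Definition cocoercive {W : Type} (ip : W -> W -> R) (sub : W -> W -> W)
  (beta : R) (S : W -> W) : Prop :=
  forall w w', ip (sub w w') (sub (S w) (S w'))
               >= beta * ip (sub (S w) (S w')) (sub (S w) (S w')).

(* 1/2 min{chi, 1/(2 dstar)}, with 1/(2 dstar) = +infinity when dstar = 0 *)
Definition beta_bound (chi ds : R) : R :=
  / 2 * (if Req_EM_T ds 0 then chi else Rmin chi (/ (2 * ds))).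

(** Ā is a skew-adjoint linear operator plus the normal cone of the closed convex set
    {(λ, z, x) : R x ∈ Ω}.  The skew part cancels from every monotonicity inequality,
    so a point monotonically related to the graph of Ā has residuals that are
    monotonically related to the normal cone of Ω; the cone is maximal because every
    point has a nearest point in a nonempty closed convex set.

    For B̄, Assumption 4 makes Rᵀ F cocoercive with constant χ̄, and Cauchy–Schwarz on
    the rows of the incidence matrix (row i has L_ii nonzero entries, each column two)
    gives ‖L x‖² ≤ 2 d* ⟨x, L x⟩; the bound ‖a + b‖² ≤ 2‖a‖² + 2‖b‖² combines them. *)
From Pilot Require Import Defs.
From HB Require Import structures.
From mathcomp Require Import all_boot.
From Stdlib Require Import Reals Lra Classical ClassicalEpsilon FunctionalExtensionality.
Local Open Scope R_scope.

HB.instance Definition _ := Monoid.isComLaw.Build R 0 Rplus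
  (fun a b c => esym (Rplus_assoc a b c)) Rplus_comm Rplus_0_l.

Section FiniteSums.
Context {T : finType}.
Implicit Types u v : T -> R.

Lemma vsum_ext u v : (forall t, u t = v t) -> vsum u = vsum v.
Proof. by move=> uv; apply: eq_bigr => t _. Qed.

Lemma vsumD u v : vsum (fun t => u t + v t) = vsum u + vsum v.
Proof. exact: big_split. Qed.

Lemma vsumZ c u : vsum (fun t => c * u t) = c * vsum u.
Proof. by rewrite /vsum; elim/big_rec2: _ => [|t a b _ ->]; ring. Qed.

Lemma vsumN u : vsum (fun t => - u t) = - vsum u.
Proof. by rewrite /vsum; elim/big_rec2: _ => [|t a b _ ->]; ring. Qed.

Lemma vsumB u v : vsum (fun t => u t - v t) = vsum u - vsum v.
Proof. by rewrite /Rminus -vsumN -vsumD. Qed.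

Lemma vsum_le u v : (forall t, u t <= v t) -> vsum u <= vsum v.
Proof. by move=> uv; apply: big_ind2 => // *; lra. Qed.

Lemma vsum_ge0 u : (forall t, 0 <= u t) -> 0 <= vsum u.
Proof. by move=> u_ge0; apply: big_ind => // *; lra. Qed.

Lemma vsum_ge_term u t0 : (forall t, 0 <= u t) -> u t0 <= vsum u.
Proof.
move=> u_ge0; rewrite /vsum (bigD1 t0) //=.
have : 0 <= \big[Rplus/0]_(t | t != t0) u t by apply: big_ind => // *; lra.
lra.
Qed.

Lemma vsum_delta (a : T -> R) t0 : vsum (fun t => if t0 == t then a t else 0) = a t0.
Proof.
rewrite /vsum (bigD1 t0) //= eqxx big1 ?Rplus_0_r // => t.
by rewrite eq_sym => /negbTE ->.
Qed.

Lemma dotC u v : dot u v = dot v u.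
Proof. by apply: vsum_ext => t; ring. Qed.

Lemma nsq_ge0 u : 0 <= nsq u.
Proof. by apply: vsum_ge0 => t; nra. Qed.

Lemma nsq_eq0 u : nsq u = 0 -> forall t, u t = 0.
Proof.
move=> u0 t; have := @vsum_ge_term (fun t => u t * u t) t (fun t => ltac:(nra)).
by rewrite -/(dot u u) -/(nsq u) u0; nra.
Qed.

Lemma cauchy_schwarz u v : dot u v * dot u v <= nsq u * nsq v.
Proof.
have quad t : 0 <= t * t * nsq u - 2 * t * dot u v + nsq v.
  have -> : t * t * nsq u - 2 * t * dot u v + nsq v = nsq (fun s => t * u s - v s).
    by rewrite /nsq /dot -!vsumZ -vsumB -vsumD; apply: vsum_ext => s; ring.
  exact: nsq_ge0.
set B := dot u v; set A := nsq u.
have [A_gt0|A0] := Rle_lt_or_eq_dec 0 A (nsq_ge0 u).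
  have := quad (B / A).
  have -> : B / A * (B / A) * A - 2 * (B / A) * B + nsq v = nsq v - B * B / A
    by field; lra.
  have : B * B / A * A = B * B by field; lra.
  nra.
have uz := nsq_eq0 u (esym A0).
have -> : B = 0 * vsum v by rewrite -vsumZ; apply: vsum_ext => s; rewrite uz; ring.
rewrite -A0; lra.
Qed.

End FiniteSums.

Lemma vsum_exch (T1 T2 : finType) (F : T1 -> T2 -> R) :
  vsum (fun a => vsum (F a)) = vsum (fun b => vsum (fun a => F a b)).
Proof. exact: exchange_big. Qed.

Lemma vsum_sig (I : finType) (J : I -> finType) (h : {i : I & J i} -> R) :
  vsum h = vsum (fun i => vsum (fun k : J i => h (Tagged J k))).
Proof.
rewrite /vsum (sig_big_dep xpredT (fun i => xpredT) (fun i k => h (Tagged J k))) /=.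
by apply: eq_bigr => -[i k].
Qed.

Lemma cv_const c : Un_cv (fun _ => c) c.
Proof. by move=> e e_gt0; exists 0%nat => n _; rewrite /Rdist Rminus_diag Rabs_R0. Qed.

Lemma vsum_cvg (T : finType) (a : nat -> T -> R) (l : T -> R) :
  (forall t, Un_cv (fun k => a k t) (l t)) -> Un_cv (fun k => vsum (a k)) (vsum l).
Proof.
move=> al; rewrite /vsum; elim: (index_enum T) => [|t s IH].
  by rewrite big_nil; apply: (Un_cv_ext (fun _ => 0)) => [n|]; [rewrite big_nil | apply: cv_const].
rewrite big_cons; apply: (Un_cv_ext (fun k => a k t + \big[Rplus/0]_(t <- s) a k t)).
  by move=> n; rewrite big_cons.
exact: CV_plus.
Qed.

Section Dot2.
Context {T1 T2 : finType}.
Implicit Types a b c : T1 -> T2 -> R.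

Lemma dot2_ext a b b' : (forall i r, b i r = b' i r) -> dot2 a b = dot2 a b'.
Proof. by move=> bb'; apply: vsum_ext => i; apply: vsum_ext => r; rewrite bb'. Qed.

Lemma dot2C a b : dot2 a b = dot2 b a.
Proof. by apply: vsum_ext => i; exact: dotC. Qed.

Lemma dot2D a b c : dot2 a (fun i r => b i r + c i r) = dot2 a b + dot2 a c.
Proof.
by rewrite /dot2 -vsumD; apply: vsum_ext => i; rewrite /dot -vsumD; apply: vsum_ext => r; ring.
Qed.

Lemma dot2Z a b k : dot2 a (fun i r => k * b i r) = k * dot2 a b.
Proof.
by rewrite /dot2 -vsumZ; apply: vsum_ext => i; rewrite /dot -vsumZ; apply: vsum_ext => r; ring.
Qed.

Lemma dot2N a b : dot2 a (fun i r => - b i r) = - dot2 a b.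
Proof.
have -> : - dot2 a b = -1 * dot2 a b by ring.
by rewrite -dot2Z; apply: dot2_ext => i r; ring.
Qed.

Lemma dot2B a b c : dot2 a (fun i r => b i r - c i r) = dot2 a b - dot2 a c.
Proof. by rewrite /Rminus -dot2N -dot2D. Qed.

Lemma dot2_eq0r a b : (forall i r, b i r = 0) -> dot2 a b = 0.
Proof.
move=> b0; rewrite -(Rmult_0_l (dot2 a b)) -dot2Z.
by apply: dot2_ext => i r; rewrite b0; ring.
Qed.

Lemma dot2_eq0l a b : (forall i r, a i r = 0) -> dot2 a b = 0.
Proof. by move=> a0; rewrite dot2C; apply: dot2_eq0r. Qed.

Lemma dot2_ge0 a : 0 <= dot2 a a.
Proof. by apply: vsum_ge0 => i; exact: nsq_ge0. Qed.

Lemma dot2_eq0 a : dot2 a a = 0 -> forall i r, a i r = 0.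
Proof.
move=> a0 i; apply: nsq_eq0.
have := @vsum_ge_term _ (fun i => nsq (a i)) i (fun i => nsq_ge0 _).
by rewrite -/(dot2 a a) a0 => h; have := nsq_ge0 (a i); lra.
Qed.

Lemma dot2_add_le a b :
  dot2 (fun i r => a i r + b i r) (fun i r => a i r + b i r) <= 2 * dot2 a a + 2 * dot2 b b.
Proof.
rewrite /dot2 /dot -!vsumZ -vsumD; apply: vsum_le => i.
rewrite -!vsumZ -vsumD; apply: vsum_le => r.
have := Rle_0_sqr (a i r - b i r); rewrite /Rsqr; nra.
Qed.

End Dot2.

Lemma inv_succ_cv0 : Un_cv (fun k => / (INR k + 1)) 0.
Proof.
move=> eps eps_gt0; have [K [K_eps K_gt0]] := archimed_cor1 eps eps_gt0.
exists K => k le_Kk; have := le_INR _ _ le_Kk; have := lt_0_INR _ K_gt0 => K0 Kk.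
rewrite /Rdist Rminus_0_r Rabs_pos_eq; last by apply/Rlt_le/Rinv_0_lt_compat; lra.
by apply: Rle_lt_trans K_eps; apply: Rinv_le_contravar; lra.
Qed.

Section NearestPoint.
Variables (T : finType) (S : (T -> R) -> Prop) (y : T -> R).
Hypotheses (S_closed : is_closed S) (S_convex : is_convex S).

Let d2 z := nsq (vsub y z).

Lemma d2_midpoint a b :
  nsq (vsub a b) = 2 * d2 a + 2 * d2 b - 4 * d2 (fun t => / 2 * a t + (1 - / 2) * b t).
Proof. by rewrite /d2 /nsq /dot /vsub -!vsumZ -vsumD -vsumB; apply: vsum_ext => t; field. Qed.

Lemma d2_infimum z0 : S z0 -> exists delta, (forall z, S z -> delta <= d2 z) /\
  forall eps, 0 < eps -> exists z, S z /\ d2 z < delta + eps.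
Proof.
move=> Sz0; pose E r := exists z, S z /\ r = - d2 z.
have E_bound : bound E.
  exists 0 => r [z [_ ->]].
  have : 0 <= d2 z by apply: nsq_ge0.
  lra.
have [m [m_ub m_lub]] := completeness E E_bound (ex_intro _ _ (ex_intro _ z0 (conj Sz0 erefl))).
exists (- m); split => [z Sz | eps eps_gt0].
  by have := m_ub _ (ex_intro _ z (conj Sz erefl)); lra.
apply: NNPP => no_z; have : m <= m - eps; last lra.
apply: m_lub => r [z [Sz ->]]; apply: Rnot_lt_le => lt_r.
by apply: no_z; exists z; split => //; lra.
Qed.

Lemma minimizing_seq_cauchy delta (zs : nat -> T -> R) :
  (forall z, S z -> delta <= d2 z) -> (forall k, S (zs k)) ->
  (forall k, d2 (zs k) < delta + / (INR k + 1)) ->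
  forall t, Cauchy_crit (fun k => zs k t).
Proof.
move=> lb Szs zs_near t eps eps_gt0.
have [K HK] := inv_succ_cv0 (eps * eps / 4) ltac:(nra).
exists K => j k le_Kj le_Kk.
have := HK j le_Kj; have := HK k le_Kk; rewrite /Rdist !Rminus_0_r.
move=> /Rabs_def2 [hk _] /Rabs_def2 [hj _].
have mid := lb _ (S_convex (zs j) (zs k) (/ 2) ltac:(lra) (Szs j) (Szs k)).
have := d2_midpoint (zs j) (zs k); have := zs_near j; have := zs_near k.
have := @vsum_ge_term _ (fun t => vsub (zs j) (zs k) t * vsub (zs j) (zs k) t) t
  (fun t => ltac:(nra)).
rewrite -/(dot _ _) -/(nsq _) /vsub => coord dk dj mid_eq.
have sq : Rsqr (zs j t - zs k t) < Rsqr eps by rewrite /Rsqr; lra.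
by have := Rsqr_lt_abs_0 _ _ sq; rewrite /Rdist (Rabs_pos_eq eps); lra.
Qed.

Lemma nearest_point_exists :
  (exists z0, S z0) -> exists p, S p /\ forall z, S z -> d2 p <= d2 z.
Proof.
move=> [z0 Sz0]; have [delta [lb approx]] := d2_infimum z0 Sz0.
have [zs zsP] : exists zs : nat -> T -> R,
    forall k, S (zs k) /\ d2 (zs k) < delta + / (INR k + 1).
  apply: (ClassicalEpsilon.choice (fun k z => S z /\ d2 z < delta + / (INR k + 1))) => k.
  by apply/approx/Rinv_0_lt_compat; have := pos_INR k; lra.
have Szs k := (zsP k).1; have zs_near k := (zsP k).2.
have [l zs_l] : exists l : T -> R, forall t, Un_cv (fun k => zs k t) (l t).
  apply: (ClassicalEpsilon.choice (fun t c => Un_cv (fun k => zs k t) c)) => t.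
  have [l Hl] := R_complete _ (minimizing_seq_cauchy delta zs lb Szs zs_near t).
  by exists l.
exists l; split; first exact: S_closed zs l Szs zs_l.
have d2_cvg : Un_cv (fun k => d2 (zs k)) (d2 l).
  apply: vsum_cvg => t; have dt := CV_minus _ _ _ _ (cv_const (y t)) (zs_l t).
  exact: (CV_mult _ _ _ _ dt dt).
have bound_cvg := CV_plus _ _ _ _ (cv_const delta) inv_succ_cv0.
rewrite Rplus_0_r in bound_cvg.
have := Rle_cv_lim (fun k => Rlt_le _ _ (zs_near k)) d2_cvg bound_cvg.
by move=> le_l z Sz; have := lb z Sz; lra.
Qed.

(* Moving from p towards z by a small step t changes the squared distance by
   -2 t a + O(t^2), so a must be nonpositive. *)
Lemma nearest_point_normal p :
  S p -> (forall z, S z -> d2 p <= d2 z) -> normal_cone S p (vsub y p).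
Proof.
move=> Sp p_min; split => // z Sz; apply: Rnot_lt_le => a_gt0.
set a := dot (vsub y p) (vsub z p) in a_gt0; set B := nsq (vsub z p).
have B_ge0 : 0 <= B by apply: nsq_ge0.
set t := a / (a + B + 1).
have t_gt0 : 0 < t by apply: Rdiv_lt_0_compat; lra.
have Et : t * (a + B + 1) = a by rewrite /t; field; lra.
have := p_min _ (S_convex z p t ltac:(nra) Sz Sp).
have -> : d2 (fun c => t * z c + (1 - t) * p c) = d2 p - 2 * t * a + t * t * B.
  by rewrite /d2 /a /B /nsq /dot /vsub -!vsumZ -vsumB -vsumD; apply: vsum_ext => c; ring.
nra.
Qed.

End NearestPoint.

Lemma normal_cone_projection (T : finType) (S : (T -> R) -> Prop) (y : T -> R) :
  is_closed S -> is_convex S -> (exists z0, S z0) -> exists p, normal_cone S p (vsub y p).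
Proof.
move=> S_closed S_convex S_ne.
have [p [Sp p_min]] := nearest_point_exists T S y S_closed S_convex S_ne.
by exists p; apply: nearest_point_normal.
Qed.

Lemma normal_cone_monotone (T : finType) (S : (T -> R) -> Prop) (y y' v v' : T -> R) :
  normal_cone S y v -> normal_cone S y' v' -> 0 <= dot (vsub y y') (vsub v v').
Proof.
move=> [Sy Nv] [Sy' Nv']; have := Nv y' Sy'; have := Nv' y Sy.
have -> : dot (vsub y y') (vsub v v') = - dot v (vsub y' y) - dot v' (vsub y y').
  by rewrite /dot -vsumN -vsumB; apply: vsum_ext => t; rewrite /vsub; ring.
lra.
Qed.

(* Project y + q onto S: monotonicity against the projection forces y to be it. *)
Lemma normal_cone_maximal (T : finType) (S : (T -> R) -> Prop) (y q : T -> R) :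
  is_closed S -> is_convex S -> (exists z0, S z0) ->
  (forall y' v', normal_cone S y' v' -> 0 <= dot (vsub y y') (vsub q v')) ->
  normal_cone S y q.
Proof.
move=> S_closed S_convex S_ne q_rel.
have [p Np] := normal_cone_projection T S (vadd y q) S_closed S_convex S_ne.
have := q_rel _ _ Np.
have -> : dot (vsub y p) (vsub q (vsub (vadd y q) p)) = - nsq (vsub y p).
  by rewrite /nsq /dot -vsumN; apply: vsum_ext => t; rewrite /vsub /vadd; ring.
move=> h; have yp0 : nsq (vsub y p) = 0 by have := nsq_ge0 (vsub y p); lra.
have yp : y = p.
  by apply: functional_extensionality => t; have := nsq_eq0 _ yp0 t; rewrite /vsub; lra.
subst p; suff -> : q = vsub (vadd y q) y by [].
by apply: functional_extensionality => t; rewrite /vsub /vadd; ring.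
Qed.

Lemma normal_cone_zero (T : finType) (S : (T -> R) -> Prop) (y : T -> R) :
  S y -> normal_cone S y vzero.
Proof.
move=> Sy; split => // z _.
have -> : dot vzero (vsub z y) = 0 * vsum (vsub z y).
  by rewrite -vsumZ; apply: vsum_ext => t; rewrite /vzero; ring.
lra.
Qed.

Lemma bounded_multiple_eq0 (a C : R) : 0 <= a -> (forall s, s * a <= C) -> a = 0.
Proof.
move=> a_ge0 bounded; apply: Rle_antisym => //; apply: Rnot_lt_le => a_gt0.
have := bounded ((Rabs C + 1) / a).
have -> : (Rabs C + 1) / a * a = Rabs C + 1 by field; lra.
by have := Rle_abs C; lra.
Qed.

Lemma maximally_monotoneP {W : Type} (ip : W -> W -> R) (sub : W -> W -> W)
    (T : W -> W -> Prop) :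
  monotone ip sub T ->
  (forall w u, (forall w' u', T w' u' -> 0 <= ip (sub w w') (sub u u')) -> T w u) ->
  maximally_monotone ip sub T.
Proof.
move=> T_mono T_max; split => // T' T'_mono TT' w u T'wu.
by apply: T_max => w' u' Twu'; apply: T'_mono T'wu (TT' _ _ Twu').
Qed.

Section Lifting.
Variables (N : nat) (ns : 'I_N -> nat).
Local Notation XX := (XX N ns).
Local Notation Rop := (Rop N ns).
Local Notation Rt := (Rt N ns).

Lemma Rop_Rt y : Rop (Rt y) = y.
Proof. by apply: functional_extensionality => p; rewrite /Defs.Rop /Defs.Rt eqxx. Qed.

Lemma RopB (x x' : XX) : Rop (fun i p => x i p - x' i p) = vsub (Rop x) (Rop x').
Proof. by []. Qed.

Lemma RtB y y' i p : Rt (vsub y y') i p = Rt y i p - Rt y' i p.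
Proof. by rewrite /Defs.Rt; case: eqP => _; rewrite /vsub; ring. Qed.

Lemma dot2_Rt (x : XX) y : dot2 x (Rt y) = dot (Rop x) y.
Proof.
rewrite /dot2 /dot vsum_exch; apply: vsum_ext => p.
rewrite -(vsum_delta (fun j => x j p * y p) (tag p)); apply: vsum_ext => j.
by rewrite /Defs.Rt eq_sym; case: eqP => _; ring.
Qed.

Lemma dot2_Rt_Rt y : dot2 (Rt y) (Rt y) = nsq y.
Proof. by rewrite dot2_Rt Rop_Rt. Qed.

Variable Om : forall i : 'I_N, ('I_(ns i) -> R) -> Prop.
Hypotheses (Om_closed : forall i, is_closed (@Om i)) (Om_convex : forall i, is_convex (@Om i))
  (Om_ne : forall i, exists y, Om i y).
Local Notation Omega := (Omega N ns Om).

Lemma Omega_closed : is_closed Omega.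
Proof.
move=> u l Su u_l i.
by apply: (Om_closed i (fun k => block N ns (u k) i)) => [k | c]; [apply: Su | apply: u_l].
Qed.

Lemma Omega_convex : is_convex Omega.
Proof. by move=> x y t t01 Ox Oy i; apply: Om_convex. Qed.

Lemma Omega_ne : exists y, Omega y.
Proof.
pose ys i := proj1_sig (constructive_indefinite_description _ (Om_ne i)).
exists (fun p => ys (tag p) (tagged p)) => i.
exact: proj2_sig (constructive_indefinite_description _ (Om_ne i)).
Qed.

(* The normal cone of {x : R x ∈ Ω} is R^T N_Ω(R x); the off-diagonal blocks of e
   are free directions of that set, so they must vanish. *)
Lemma lifted_normal_cone_maximal (x e : XX) :
  (forall x' v', normal_cone Omega (Rop x') v' ->
     0 <= dot2 (fun i p => x i p - x' i p) (fun i p => e i p - Rt v' i p)) ->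
  e = Rt (Rop e) /\ normal_cone Omega (Rop x) (Rop e).
Proof.
move=> e_rel; have [y0 Oy0] := Omega_ne.
pose off i p := if tag p == i then 0 else e i p.
have off0 : dot2 off off = 0.
  apply: (bounded_multiple_eq0 _ (dot2 (fun i p => x i p - Rt y0 i p) e) (dot2_ge0 off)) => s.
  have Rop_x' : Rop (fun i p => Rt y0 i p + s * off i p) = y0.
    by apply: functional_extensionality => p; rewrite /Defs.Rop /Defs.Rt /off eqxx; ring.
  have := e_rel (fun i p => Rt y0 i p + s * off i p) vzero.
  rewrite Rop_x' => /(_ (normal_cone_zero _ _ _ Oy0)).
  rewrite (dot2_ext _ _ e) => [|i p]; last by rewrite /Defs.Rt /vzero; case: eqP => _; ring.
  rewrite dot2C (dot2_ext _ _ (fun i p => x i p - Rt y0 i p - s * off i p)) => [|i p];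
    last by ring.
  rewrite dot2B dot2Z [dot2 e (fun i p => _ - _)]dot2C.
  have -> : dot2 e off = dot2 off off.
    by apply: vsum_ext => i; apply: vsum_ext => p; rewrite /off; case: eqP => _; ring.
  lra.
have e_diag i p : e i p = Rt (Rop e) i p.
  rewrite /Defs.Rt /Defs.Rop; case: eqP => [<- // | /eqP ne_i].
  by have := dot2_eq0 _ off0 i p; rewrite /off (negbTE ne_i).
have e_eq : e = Rt (Rop e).
  by do 2 apply: functional_extensionality => ?; apply: e_diag.
split => //; apply: normal_cone_maximal Omega_closed Omega_convex Omega_ne _ => y' v' Nv'.
have := e_rel (Rt y') v'; rewrite Rop_Rt => /(_ Nv').
have -> : (fun i p => e i p - Rt v' i p) = Rt (vsub (Rop e) v').
  by do 2 apply: functional_extensionality => ?; rewrite RtB -e_diag.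
by rewrite dot2_Rt RopB Rop_Rt.
Qed.

End Lifting.

Section Abar.
Variables (N M m : nat) (ns : 'I_N -> nat) (src dst : 'I_M -> 'I_N)
  (Om : forall i : 'I_N, ('I_(ns i) -> R) -> Prop)
  (A : forall i : 'I_N, 'I_m -> 'I_(ns i) -> R).
Local Notation XX := (XX N ns).
Local Notation Lam := (Lam N m).
Local Notation Zv := (Zv M m).
Local Notation bV := (bV N M m src dst).
Local Notation bVt := (bVt N M m src dst).
Local Notation bA := (bA N m ns A).
Local Notation bAt := (bAt N m ns A).
Local Notation Rop := (Rop N ns).
Local Notation Rt := (Rt N ns).
Local Notation dotW := (dotW N M m ns).
Local Notation subW := (subW N M m ns).
Local Notation Abar := (Abar N M m ns Om A src dst).
Local Notation Omega := (Omega N ns Om).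

Lemma dot2_bV (lam : Lam) (z : Zv) : dot2 lam (bV z) = dot2 z (bVt lam).
Proof.
rewrite /dot2 /dot /Defs.bV /Defs.bVt.
transitivity (vsum (fun i => vsum (fun l => vsum (fun r =>
  lam i r * Vinc N M src dst i l * z l r)))).
  apply: vsum_ext => i; rewrite vsum_exch; apply: vsum_ext => r.
  by rewrite -vsumZ; apply: vsum_ext => l; ring.
rewrite vsum_exch; apply: vsum_ext => l; rewrite vsum_exch; apply: vsum_ext => r.
by rewrite -vsumZ; apply: vsum_ext => i; ring.
Qed.

Lemma dot2_bA (lam : Lam) y : dot2 lam (bA y) = dot y (bAt lam).
Proof.
rewrite /dot2 /dot (vsum_sig _ _ (fun p => y p * bAt lam p)); apply: vsum_ext => i.
rewrite /Defs.bA /Defs.bAt /block /=.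
transitivity (vsum (fun r => vsum (fun k : 'I_(ns i) =>
  lam i r * A i r k * y (Tagged (fun j => 'I_(ns j)) k)))).
  by apply: vsum_ext => r; rewrite -vsumZ; apply: vsum_ext => k; ring.
by rewrite vsum_exch; apply: vsum_ext => k; rewrite -vsumZ; apply: vsum_ext => r; ring.
Qed.

Lemma bVB (z z' : Zv) i r : bV (fun l r => z l r - z' l r) i r = bV z i r - bV z' i r.
Proof. by rewrite /Defs.bV -vsumB; apply: vsum_ext => l; ring. Qed.

Lemma bVtB (a a' : Lam) l r : bVt (fun i r => a i r - a' i r) l r = bVt a l r - bVt a' l r.
Proof. by rewrite /Defs.bVt -vsumB; apply: vsum_ext => i; ring. Qed.

Lemma bAB y y' i r : bA (vsub y y') i r = bA y i r - bA y' i r.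
Proof. by rewrite /Defs.bA -vsumB; apply: vsum_ext => k; rewrite /block /vsub; ring. Qed.

Lemma bAtB (a a' : Lam) : bAt (fun i r => a i r - a' i r) = vsub (bAt a) (bAt a').
Proof.
by apply: functional_extensionality => p; rewrite /vsub /Defs.bAt -vsumB; apply: vsum_ext => r; ring.
Qed.

(* The linear part of Abar is skew-adjoint, so only the residuals of u survive. *)
Lemma Abar_pairing (lam lam' u1 : Lam) (z z' u2 : Zv) (x x' u3 : XX) v' :
  dotW (subW (lam, z, x) (lam', z', x'))
       (subW (u1, u2, u3) (fun i r => - bV z' i r - bA (Rop x') i r, bVt lam',
                           fun i p => Rt v' i p + Rt (bAt lam') i p))
  = dot2 (fun i r => lam i r - lam' i r) (fun i r => u1 i r + bV z i r + bA (Rop x) i r)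
  + dot2 (fun l r => z l r - z' l r) (fun l r => u2 l r - bVt lam l r)
  + dot2 (fun i p => x i p - x' i p) (fun i p => u3 i p - Rt (bAt lam) i p - Rt v' i p).
Proof.
rewrite /=.
set dl := fun i r => lam i r - lam' i r.
set dz := fun l r => z l r - z' l r.
set dx := fun i p => x i p - x' i p.
set e1 := fun i r => u1 i r + bV z i r + bA (Rop x) i r.
set e2 := fun l r => u2 l r - bVt lam l r.
set e3 := fun i p => u3 i p - Rt (bAt lam) i p - Rt v' i p.
rewrite (dot2_ext dl _ (fun i r => e1 i r - bV dz i r - bA (Rop dx) i r)) //; last first.
  by move=> i r; rewrite /e1 bVB RopB bAB; ring.
rewrite (dot2_ext dz _ (fun l r => e2 l r + bVt dl l r)) //; last first.
  by move=> l r; rewrite /e2 bVtB; ring.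
rewrite (dot2_ext dx _ (fun i p => e3 i p + Rt (bAt dl) i p)) //; last first.
  by move=> i p; rewrite /e3 bAtB RtB; ring.
clearbody e1 e2 e3.
by rewrite !dot2B !dot2D dot2_Rt dot2_bV dot2_bA; ring.
Qed.

Lemma Abar_monotone : monotone dotW subW Abar.
Proof.
move=> [[lam z] x] [[lam' z'] x'] [[u1 u2] u3] [[u1' u2'] u3']
  [-> [-> [v [Nv ->]]]] [-> [-> [v' [Nv' ->]]]].
rewrite Abar_pairing [dot2 (fun i r => lam i r - _) _]dot2_eq0r => [|i r]; last by ring.
rewrite [dot2 (fun l r => z l r - _) _]dot2_eq0r => [|l r]; last by ring.
rewrite !Rplus_0_l.
rewrite (dot2_ext _ _ (Rt (vsub v v'))) => // [|i p]; last by rewrite RtB; ring.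
by rewrite dot2_Rt RopB; apply: normal_cone_monotone Nv Nv'.
Qed.

Hypotheses (Om_closed : forall i, is_closed (@Om i)) (Om_convex : forall i, is_convex (@Om i))
  (Om_ne : forall i, exists y, Om i y).

Lemma Abar_maximal : maximally_monotone dotW subW Abar.
Proof.
apply: maximally_monotoneP; first exact: Abar_monotone.
move=> [[lam z] x] [[u1 u2] u3] u_rel.
set e1 := fun i r => u1 i r + bV z i r + bA (Rop x) i r.
set e2 := fun l r => u2 l r - bVt lam l r.
set e3 := fun i p => u3 i p - Rt (bAt lam) i p.
have pairing lam' z' x' v' : normal_cone Omega (Rop x') v' ->
    0 <= dot2 (fun i r => lam i r - lam' i r) e1 + dot2 (fun l r => z l r - z' l r) e2
       + dot2 (fun i p => x i p - x' i p) (fun i p => e3 i p - Rt v' i p).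
  move=> Nv'; rewrite -Abar_pairing; apply: u_rel.
  by split; [|split; [|exists v']].
have [e3_eq Nx] : e3 = Rt (Rop e3) /\ normal_cone Omega (Rop x) (Rop e3).
  apply: (lifted_normal_cone_maximal N ns Om Om_closed Om_convex Om_ne) => x' v' Nv'.
  have := pairing lam z x' v' Nv'.
  rewrite (dot2_eq0l (fun i r => lam i r - lam i r)) => [|i r]; last by ring.
  rewrite (dot2_eq0l (fun l r => z l r - z l r)) => [|l r]; last by ring.
  by rewrite !Rplus_0_l.
have := pairing (fun i r => lam i r + e1 i r) (fun l r => z l r + e2 l r) x vzero
  (normal_cone_zero _ _ _ Nx.1).
rewrite (dot2_eq0l (fun i p => x i p - x i p)) => [|i p]; last by ring.
rewrite dot2C (dot2_ext _ _ (fun i r => - e1 i r)) => [|i r]; last by ring.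
rewrite [dot2 _ e2]dot2C (dot2_ext _ _ (fun l r => - e2 l r)) => [|l r]; last by ring.
rewrite !dot2N => h.
have := dot2_ge0 e1; have := dot2_ge0 e2 => e2_ge0 e1_ge0.
have e1_0 := dot2_eq0 e1 ltac:(lra); have e2_0 := dot2_eq0 e2 ltac:(lra).
split; [|split; [|exists (Rop e3); split => //]];
  apply: functional_extensionality => i; apply: functional_extensionality => r.
- by have := e1_0 i r; rewrite /e1; lra.
- by have := e2_0 i r; rewrite /e2; lra.
- by rewrite -e3_eq /e3; ring.
Qed.

End Abar.

Section Laplacian.
Variables (N M : nat) (src dst : 'I_M -> 'I_N).
Local Notation V := (Vinc N M src dst).
Local Notation Lap := (Lap N M src dst).
Local Notation dstar := (dstar N M src dst).

Lemma Vinc_cube i l : V i l * V i l * V i l = V i l.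
Proof. by rewrite /Vinc; case: eqP => _; [|case: eqP => _]; ring. Qed.

Lemma Vinc_col_nsq l : vsum (fun i => V i l * V i l) <= 2.
Proof.
apply: Rle_trans (_ : vsum (fun i => (if dst l == i then 1 else 0)
                                   + (if src l == i then 1 else 0)) <= _).
  by apply: vsum_le => i; rewrite /Vinc; case: eqP => _; case: eqP => _; lra.
by rewrite vsumD !(vsum_delta (fun _ => 1)); lra.
Qed.

Lemma Lap_diag_le_dstar i : Lap i i <= dstar.
Proof.
rewrite /dstar; have : i \in index_enum 'I_N by rewrite mem_index_enum.
elim: (index_enum _) => [//|j s IH].
rewrite in_cons big_cons => /orP [/eqP -> | /IH]; first exact: Rmax_l.
by move=> /Rle_trans; apply; apply: Rmax_r.
Qed.

Lemma dstar_ge0 : 0 <= dstar.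
Proof.
rewrite /dstar; elim/big_rec: _ => [|i d _ d_ge0]; first lra.
exact: Rle_trans d_ge0 (Rmax_r _ _).
Qed.

Lemma Lap_mul (xv : 'I_N -> R) i :
  vsum (fun j => Lap i j * xv j) = vsum (fun l => V i l * vsum (fun j => V j l * xv j)).
Proof.
transitivity (vsum (fun j => vsum (fun l => V i l * V j l * xv j))).
  by apply: vsum_ext => j; rewrite Rmult_comm -vsumZ; apply: vsum_ext => l; ring.
by rewrite vsum_exch; apply: vsum_ext => l; rewrite -vsumZ; apply: vsum_ext => j; ring.
Qed.

Lemma Lap_quad (xv : 'I_N -> R) :
  vsum (fun i => xv i * vsum (fun j => Lap i j * xv j))
  = nsq (fun l => vsum (fun j => V j l * xv j)).
Proof.
under vsum_ext => i do rewrite Lap_mul -vsumZ.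
by rewrite vsum_exch; apply: vsum_ext => l; rewrite -vsumZ; apply: vsum_ext => i; ring.
Qed.

Lemma incidence_nsq_bound (yv : 'I_M -> R) :
  nsq (fun i => vsum (fun l => V i l * yv l)) <= 2 * dstar * nsq yv.
Proof.
apply: Rle_trans (_ : vsum (fun i => dstar * vsum (fun l => V i l * V i l * (yv l * yv l))) <= _).
  apply: vsum_le => i.
  have -> : vsum (fun l => V i l * yv l) = dot (V i) (fun l => V i l * V i l * yv l).
    apply: vsum_ext => l.
    by transitivity ((V i l * V i l * V i l) * yv l); [rewrite Vinc_cube | ring].
  apply: Rle_trans (cauchy_schwarz _ _) _.
  have -> : nsq (fun l => V i l * V i l * yv l) = vsum (fun l => V i l * V i l * (yv l * yv l)).
    apply: vsum_ext => l.
    by transitivity (V i l * (V i l * V i l * V i l) * (yv l * yv l)); [ring | rewrite Vinc_cube].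
  apply: Rmult_le_compat_r; first by apply: vsum_ge0 => l; nra.
  exact: Lap_diag_le_dstar.
rewrite vsumZ vsum_exch (Rmult_comm 2) Rmult_assoc.
apply: Rmult_le_compat_l; first exact: dstar_ge0.
rewrite /nsq /dot -vsumZ; apply: vsum_le => l.
rewrite (vsum_ext _ (fun i => (yv l * yv l) * (V i l * V i l))) => [|i]; last by ring.
rewrite vsumZ; have := Vinc_col_nsq l; have : 0 <= yv l * yv l by nra.
nra.
Qed.

End Laplacian.

Section Bbar.
Variables (N M m : nat) (ns : 'I_N -> nat) (src dst : 'I_M -> 'I_N)
  (b : 'I_N -> 'I_m -> R) (g : forall i : 'I_N, (Idx N ns -> R) -> 'I_(ns i) -> R).
Local Notation XX := (XX N ns).
Local Notation bL := (bL N M ns src dst).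
Local Notation dstar := (dstar N M src dst).
Local Notation Rt := (Rt N ns).
Local Notation Fop := (Fop N ns g).
Local Notation dotW := (dotW N M m ns).
Local Notation subW := (subW N M m ns).
Local Notation Bbar := (Bbar N M m ns b src dst g).

Lemma dot2_bL_ge0 (x : XX) : 0 <= dot2 x (bL x).
Proof.
rewrite /dot2 /dot vsum_exch; apply: vsum_ge0 => p.
by rewrite (Lap_quad N M src dst (fun i => x i p)); apply: nsq_ge0.
Qed.

Lemma dot2_bL_le (x : XX) : dot2 (bL x) (bL x) <= 2 * dstar * dot2 x (bL x).
Proof.
rewrite /dot2 /dot vsum_exch [X in _ <= _ * X]vsum_exch -vsumZ; apply: vsum_le => p.
rewrite (Lap_quad N M src dst (fun i => x i p)).
under vsum_ext => i do rewrite /Defs.bL (Lap_mul N M src dst (fun i => x i p)).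
exact: incidence_nsq_bound.
Qed.

Lemma bLB (x x' : XX) i p : bL (fun i p => x i p - x' i p) i p = bL x i p - bL x' i p.
Proof. by rewrite /Defs.bL -vsumB; apply: vsum_ext => j; ring. Qed.

Definition Bbar_dx (x x' : XX) : XX := fun i p =>
  Rt (vsub (Fop x) (Fop x')) i p + bL (fun i p => x i p - x' i p) i p.

Lemma Bbar_sub_snd (w w' : Wsp N M m ns) : (subW (Bbar w) (Bbar w')).2 = Bbar_dx w.2 w'.2.
Proof.
move: w w' => [[lam z] x] [[lam' z'] x'].
by do 2 apply: functional_extensionality => ?; rewrite /Bbar_dx /= RtB bLB; ring.
Qed.

Lemma dotW_Bbar_sub (w'' w w' : Wsp N M m ns) :
  dotW w'' (subW (Bbar w) (Bbar w')) = dot2 w''.2 (Bbar_dx w.2 w'.2).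
Proof.
rewrite -Bbar_sub_snd; move: w'' w w' => [[lam'' z''] x''] [[lam z] x] [[lam' z'] x'] /=.
rewrite (dot2_eq0r lam'') => [|i r]; last by ring.
by rewrite (dot2_eq0r z'') => [|l r]; [rewrite !Rplus_0_l | ring].
Qed.

(* beta |dF + dL|^2 <= 2 beta |dF|^2 + 2 beta |dL|^2 <= chi |dF|^2 + <dx, dL> <= <dx, dF + dL>. *)
Lemma Bbar_cocoercive chi beta :
  Assumption4 N ns g chi -> 0 <= beta -> 2 * beta <= chi -> 4 * beta * dstar <= 1 ->
  cocoercive dotW subW beta Bbar.
Proof.
move=> A4 beta_ge0 beta_chi beta_dstar w w'.
rewrite !dotW_Bbar_sub Bbar_sub_snd; move: w w' => [[lam z] x] [[lam' z'] x'] /=.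
set dx := fun i p => x i p - x' i p.
set dF := Rt (vsub (Fop x) (Fop x')).
set dL := bL dx.
have dF_coco : chi * dot2 dF dF <= dot2 dx dF.
  have := A4 x x'; rewrite -/dx (dot2_ext _ _ dF) => [|i p]; last by rewrite /dF RtB.
  by rewrite /dF dot2_Rt_Rt; lra.
have DD_le := dot2_add_le dF dL; have LL_le := dot2_bL_le dx; have Q_ge0 := dot2_bL_ge0 dx.
have FF_ge0 := dot2_ge0 dF; rewrite -/dL in LL_le Q_ge0.
rewrite /Bbar_dx -/dx -/dF -/dL dot2D.
set Q := dot2 dx dL in Q_ge0 LL_le *.
set FF := dot2 dF dF in dF_coco FF_ge0 DD_le *.
set LL := dot2 dL dL in DD_le LL_le *.
set DD := dot2 _ _ in DD_le *.
have : beta * DD <= beta * (2 * FF + 2 * LL) by apply: Rmult_le_compat_l.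
have : beta * LL <= beta * (2 * dstar * Q) by apply: Rmult_le_compat_l.
have : 4 * beta * dstar * Q <= 1 * Q by apply: Rmult_le_compat_r.
have : 2 * beta * FF <= chi * FF by apply: Rmult_le_compat_r.
lra.
Qed.

End Bbar.

Lemma beta_bound_le chi d beta :
  0 <= d -> 0 < beta < beta_bound chi d -> 2 * beta <= chi /\ 4 * beta * d <= 1.
Proof.
rewrite /beta_bound => d_ge0 [beta_gt0]; case: Req_EM_T => [d0 | d_ne0] /= beta_lt.
  by rewrite d0; split; lra.
have d_gt0 : 0 < d by lra.
have := Rmin_l chi (/ (2 * d)); have := Rmin_r chi (/ (2 * d)).
have inv : / (2 * d) * (2 * d) = 1 by field; lra.
move=> le_inv le_chi; split; first lra.
have : 2 * beta * (2 * d) <= / (2 * d) * (2 * d) by apply: Rmult_le_compat_r; lra.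
lra.
Qed.

Theorem lemma3 (N M m : nat) (ns : 'I_N -> nat) (src dst : 'I_M -> 'I_N)
  (Om : forall i : 'I_N, ('I_(ns i) -> R) -> Prop)
  (A : forall i : 'I_N, 'I_m -> 'I_(ns i) -> R) (b : 'I_N -> 'I_m -> R)
  (f : 'I_N -> (Idx N ns -> R) -> R)
  (g : forall i : 'I_N, (Idx N ns -> R) -> 'I_(ns i) -> R)
  (chi : R) :
  simple_connected_graph N M src dst ->
  is_partial_gradient_C1 N ns f g ->
  Assumption1 N m ns Om A b f ->
  0 < chi -> Assumption4 N ns g chi ->
  maximally_monotone (dotW N M m ns) (subW N M m ns) (Abar N M m ns Om A src dst) /\
  (forall beta, 0 < beta < beta_bound chi (dstar N M src dst) ->
     cocoercive (dotW N M m ns) (subW N M m ns) beta (Bbar N M m ns b src dst g)).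
Proof.
(* Besides Assumption 4, only closedness, convexity and nonemptiness of the Ω_i are used. *)
move=> _ _ [Om_props _] _ A4.
have Om_closed i : is_closed (@Om i) by case: (Om_props i).
have Om_convex i : is_convex (@Om i) by case: (Om_props i) => _ [].
have Om_ne i : exists y, Om i y.
  have [_ [_ [y [eps [eps_gt0 ball]]]]] := Om_props i.
  by exists y; apply: ball => c; rewrite Rminus_diag Rabs_R0.
split; first exact: (Abar_maximal N M m ns src dst Om A Om_closed Om_convex Om_ne).
move=> beta beta_range.
have [beta_chi beta_dstar] :=
  beta_bound_le chi _ beta (dstar_ge0 N M src dst) beta_range.
by apply: (Bbar_cocoercive N M m ns src dst b g chi beta A4) => //; case: beta_range; lra.
Qed.
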